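(* Let $G$ be a finite graph with $v$ vertices and girth $\ell(G)$ (the length of a shortest cycle of $G$, with $\ell(G)=\infty$ if $G$ has no cycle). Let $m\ge 3$ and $0<i<\ell(G)$. Then $H^{i,j}_{\mathcal A_m}(G)=0$ for every $j\ge (m-1)(v-i)$.
   Context: For $m\ge 2$ let $\mathcal A_m=\mathbb Z[x]/(x^m)$. For a finite graph $G$ with vertex set $V(G)$, edge set $E(G)$ (with a fixed total order), and $s\subseteq E(G)$, let $[G:s]$ be the spanning subgraph with vertex set $V(G)$ and edge set $s$, and $k(s)$ its number of connected components. An enhanced state is a pair $(s,c)$ where $s\subseteq E(G)$ and $c$ assigns to each component $C$ of $[G:s]$ an exponent $c(C)\in\{0,\dots,m-1\}$ (i.e. a weight $x^{c(C)}$); its bidegree is $(i,j)=(|s|,\sum_C c(C))$. The cochain group $C^{i,j}_{\mathcal A_m}(G)$ is the free abelian group on enhanced states of bidegree $(i,j)$ (equivalently the degree-$j$ part of $\bigoplus_{|s|=i}\mathcal A_m^{\otimes k(s)}$, one tensor factor per component). The differential $d:C^{i,j}\to C^{i+1,j}$ is $d=\sum_{e\notin s}(-1)^{|\{f\in s: f<e\}|}d_e$, where for $e\notin s$: if $e$ joins two different components $C_1,C_2$ of $[G:s]$, then $d_e(s,c)$ is the enhanced state on $s\cup\{e\}$ in which the merged component gets weight $x^{c(C_1)}x^{c(C_2)}$ in $\mathcal A_m$ (so $d_e(s,c)=0$ if $c(C_1)+c(C_2)\ge m$) and all other components keep their weights; if both endpoints of $e$ lie in the same component of $[G:s]$, $d_e(s,c)$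 is the enhanced state on $s\cup\{e\}$ with the same weights (identity map). $H^{i,j}_{\mathcal A_m}(G)$ denotes the cohomology of this complex (chromatic graph cohomology with algebra $\mathcal A_m$). *)

(* Chromatic graph cohomology with algebra A_m = Z[x]/(x^m). *)
From mathcomp Require Import all_boot all_order all_algebra.
Set Implicit Arguments.
Unset Strict Implicit.
Unset Printing Implicit Defensive.
Import GRing.Theory.
Local Open Scope ring_scope.

(* A finite graph (loops and multiple edges allowed) with vertex set 'I_n and
   edge set 'I_k; the edge e joins the two vertices of [ends e].  The fixed
   total order on edges is the natural order of 'I_k. *)

Definition joins (n k : nat) (ends : 'I_k -> 'I_n * 'I_n) (e : 'I_k) (x y : 'I_n) : bool :=
  (ends e == (x, y)) || (ends e == (y, x)).

Definition has_cycle_of_length (n k : nat) (ends : 'I_k -> 'I_n * 'I_n) (l : nat) : Prop :=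
  (0 < l)%N /\
  exists (vs : 'I_l -> 'I_n) (es : 'I_l -> 'I_k),
    injective vs /\ injective es /\
    forall j : 'I_l, joins ends (es j) (vs j) (vs (ordS j)).

Definition adj (n k : nat) (ends : 'I_k -> 'I_n * 'I_n) (s : {set 'I_k}) : rel 'I_n :=
  fun x y => [exists e in s, joins ends e x y].

Definition comp (n k : nat) (ends : 'I_k -> 'I_n * 'I_n) (s : {set 'I_k}) (x : 'I_n)
  : {set 'I_n} := [set y | connect (adj ends s) x y].

Definition comps (n k : nat) (ends : 'I_k -> 'I_n * 'I_n) (s : {set 'I_k})
  : {set {set 'I_n}} := [set comp ends s x | x : 'I_n].

(* Candidate enhanced states: an edge set s and a weight exponent in 'I_m for
   every vertex set; a state is valid when the weight is 0 on every vertex set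
   that is not a component of [G:s] (so valid states = enhanced states). *)
Definition State (n k m : nat) : finType :=
  ({set 'I_k} * {ffun {set 'I_n} -> 'I_m})%type.

Definition valid (n k m : nat) (ends : 'I_k -> 'I_n * 'I_n) (st : State n k m) : bool :=
  [forall C : {set 'I_n}, (C \notin comps ends st.1) ==> (nat_of_ord (st.2 C) == 0%N)].

Definition deg_i (n k m : nat) (st : State n k m) : nat := #|st.1|.

Definition deg_j (n k m : nat) (ends : 'I_k -> 'I_n * 'I_n) (st : State n k m) : nat :=
  (\sum_(C in comps ends st.1) nat_of_ord (st.2 C))%N.

(* the per-edge map d_e on a basis state (None = 0) *)
Definition d_e (n k m : nat) (ends : 'I_k -> 'I_n * 'I_n) (e : 'I_k) (st : State n k m)
  : option (State n k m) :=
  let s := st.1 in let w := st.2 in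
  let Ca := comp ends s (ends e).1 in
  let Cb := comp ends s (ends e).2 in
  if Ca == Cb then Some (e |: s, w)
  else if (m <= w Ca + w Cb)%N then None
  else Some (e |: s,
             [ffun C => if C == Ca :|: Cb then insubd (w Ca) (w Ca + w Cb)%N
                        else if (C == Ca) || (C == Cb) then insubd (w Ca) 0%N
                        else w C]).

Definition dcoef (n k m : nat) (ends : 'I_k -> 'I_n * 'I_n) (st t : State n k m) : int :=
  \sum_(e < k | e \notin st.1)
     (-1) ^+ #|[set f in st.1 | (f < e)%N]| * (if d_e ends e st == Some t then 1 else 0).

(* cochains: integer combinations of basis states *)
Definition dmap (n k m : nat) (ends : 'I_k -> 'I_n * 'I_n) (x : {ffun State n k m -> int})
  : {ffun State n k m -> int} :=
  [ffun t => \sum_(st : State n k m) x st * dcoef ends st t].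

Definition in_cochain (n k m : nat) (ends : 'I_k -> 'I_n * 'I_n) (i j : nat)
  (x : {ffun State n k m -> int}) : Prop :=
  forall st, x st != 0 -> [&& valid ends st, deg_i st == i & deg_j ends st == j].

Definition H_vanishes (n k m : nat) (ends : 'I_k -> 'I_n * 'I_n) (i j : nat) : Prop :=
  forall x : {ffun State n k m -> int},
    in_cochain ends i j x -> (forall t, dmap ends x t = 0) ->
    exists y : {ffun State n k m -> int},
      in_cochain ends i.-1 j y /\ forall t, dmap ends y t = x t.

From Pilot Require Import Defs.
From mathcomp Require Import all_boot all_order all_algebra.
From mathcomp Require Import zify.

(* For #|s| <= i < girth, the graph [G:s] is a forest with n - #|s| components, so a state of
   bidegree (i,j) with j >= (m-1)(n-i) carries the top weight x^(m-1) on each of its components,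
   and a cochain of C^{i,j} is a function a on the i-edge sets.  Merging two top weights gives 0
   in A_m, hence d only sees the edges that close a cycle, which is then a circuit of exactly
   i+1 edges: a is a cocycle iff its signed sum over the i-subsets of every (i+1)-circuit
   vanishes.
   A primitive is built from the states on s minus its largest edge e that weight the two
   components joined by e with x and x^(m-2) (this needs m >= 3) and the others with x^(m-1);
   their differentials only merge these two components.  Keeping only those s that no edge
   larger than e closes into a circuit, the coefficient of an i-set r in d of the primitive is
   the diagonal term a(r) when no edge larger than all of r closes r into a circuit; otherwise
   it comes entirely from the largest such edge h, and equals a(r) by the cocycle relation on
   the circuit r + h. *)

Set Implicit Arguments.
Unset Strict Implicit.
Unset Printing Implicit Defensive.
Import GRing.Theory.

Lemma sum_only1 (I : finType) (V : zmodType) (F : I -> V) i0 :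
  (forall i, F i != 0%R -> i == i0) -> (\sum_i F i = F i0)%R.
Proof.
move=> F0; rewrite (bigD1 i0) //= big1 ?addr0 // => i ne_i_i0.
by apply/eqP; apply: contraR ne_i_i0 => /F0.
Qed.

Lemma sum_only2 (I J : finType) (V : zmodType) (F : I -> J -> V) i0 j0 :
  (forall i j, F i j != 0%R -> (i == i0) && (j == j0)) ->
  (\sum_i \sum_j F i j = F i0 j0)%R.
Proof.
move=> F0; rewrite (sum_only1 (i0 := i0)).
  by apply: sum_only1 => j /F0 /andP[].
move=> i; apply: contraR => ne_i_i0; apply/eqP; apply: big1 => j _.
by apply/eqP; apply: contraR ne_i_i0 => /F0 /andP[].
Qed.

Lemma exists_max_ord k (P : pred 'I_k) :
  (exists x, P x) -> exists x, P x /\ forall y, P y -> (y <= x)%N.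
Proof. by case=> x0 Px0; case: (arg_maxnP val Px0) => y Py Hy; exists y. Qed.

Lemma setD1U1 (T : finType) (X : {set T}) x y :
  x != y -> (y |: X) :\ x = y |: (X :\ x).
Proof.
move=> Nxy; apply/setP => z; rewrite !inE.
by case: (z =P y) => [->|] //=; rewrite eq_sym Nxy.
Qed.

Section Connectivity.
Variables (n k : nat) (ends : 'I_k -> 'I_n * 'I_n).
Implicit Types (X Y : {set 'I_k}) (e f g : 'I_k) (x y z : 'I_n).
Local Notation component := (Defs.comp ends).

Definition conn X := connect (adj ends X).
Definition internal X e := conn X (ends e).1 (ends e).2.
Definition circuit X := [forall f in X, internal (X :\ f) f].

Lemma joinsC e x y : joins ends e x y = joins ends e y x.
Proof. by rewrite /joins orbC. Qed.

Lemma joins_ends e : joins ends e (ends e).1 (ends e).2.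
Proof. by rewrite /joins; case: (ends e) => a b /=; rewrite eqxx. Qed.

Lemma joinsP e x y : joins ends e x y ->
  (x = (ends e).1 /\ y = (ends e).2) \/ (x = (ends e).2 /\ y = (ends e).1).
Proof.
by rewrite /joins; case: (ends e) => a b /=; case/orP => /eqP [-> ->]; [left|right].
Qed.

Lemma joins_same e x y x' y' : joins ends e x y -> joins ends e x' y' ->
  (x = x' /\ y = y') \/ (x = y' /\ y = x').
Proof. by case/joinsP=> -[-> ->]; case/joinsP=> -[-> ->]; tauto. Qed.

Lemma adj_sym X : symmetric (adj ends X).
Proof.
by move=> x y; apply/existsP/existsP => -[e /andP[eX J]]; exists e; rewrite eX joinsC.
Qed.

Lemma connC X x y : conn X x y = conn X y x.
Proof. exact: (sym_connect_sym (adj_sym X)). Qed.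

Lemma conn_refl X x : conn X x x.
Proof. exact: connect0. Qed.

Lemma conn_trans X y x z : conn X x y -> conn X y z -> conn X x z.
Proof. exact: connect_trans. Qed.

Lemma conn_edge X e : e \in X -> internal X e.
Proof. by move=> eX; apply: connect1; apply/existsP; exists e; rewrite eX joins_ends. Qed.

Lemma conn_subset X Y : X \subset Y -> forall x y, conn X x y -> conn Y x y.
Proof.
move=> sXY; apply: connect_sub => x y /existsP [e /andP[eX J]].
by apply: connect1; apply/existsP; exists e; rewrite (subsetP sXY _ eX).
Qed.

Lemma conn_setU1 X f x y :
  conn (f |: X) x y =
  [|| conn X x y,
      conn X x (ends f).1 && conn X (ends f).2 y
    | conn X x (ends f).2 && conn X (ends f).1 y].
Proof.
set u := (ends f).1; set v := (ends f).2.
have cuv : conn (f |: X) u v by apply: conn_edge; rewrite setU11.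
have sX : X \subset f |: X by apply/subsetP => z zX; rewrite setU1r.
apply/idP/idP; last first.
  case/or3P => [c|/andP[c1 c2]|/andP[c1 c2]]; first exact: conn_subset c.
    exact: conn_trans (conn_subset sX c1) (conn_trans cuv (conn_subset sX c2)).
  rewrite connC in cuv.
  exact: conn_trans (conn_subset sX c1) (conn_trans cuv (conn_subset sX c2)).
case/connectP => p + ->; elim: p x => [|z p IH] x /=; first by rewrite conn_refl.
case/andP => /existsP[e /andP[+ J]] /IH {IH}; case/setU1P => [ef|eX].
  have c0 := conn_refl X; subst e.
  by case/joinsP: J => -[-> ->]; case/or3P => [c|/andP[_ c]|/andP[_ c]];
     rewrite ?c0 ?c ?orbT.
have cxz : conn X x z by apply: connect1; apply/existsP; exists e; rewrite eX.
case/or3P => [c|/andP[c1 c2]|/andP[c1 c2]].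
- by rewrite (conn_trans cxz c).
- by rewrite (conn_trans cxz c1) c2 orbT.
- by rewrite (conn_trans cxz c1) c2 !orbT.
Qed.

Lemma conn_subset_internal X Y g x y : internal Y g -> X :\ g \subset Y ->
  conn X x y -> conn Y x y.
Proof.
move=> gY sXY cXxy; have : conn (g |: (X :\ g)) x y.
  by apply: conn_subset cXxy; apply/subsetP => z zX; rewrite !inE zX andbT orbN.
rewrite conn_setU1; have cY := conn_subset sXY.
case/or3P => [c|/andP[c1 c2]|/andP[c1 c2]]; first exact: cY c.
  exact: conn_trans (cY _ _ c1) (conn_trans gY (cY _ _ c2)).
rewrite /internal connC in gY.
exact: conn_trans (cY _ _ c1) (conn_trans gY (cY _ _ c2)).
Qed.

Lemma mem_comp X x y : (y \in component X x) = conn X x y.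
Proof. by rewrite inE. Qed.

Lemma comp_refl X x : x \in component X x.
Proof. by rewrite mem_comp conn_refl. Qed.

Lemma eq_comp X x y : (component X x == component X y) = conn X x y.
Proof.
apply/eqP/idP => [E|cxy]; first by rewrite -mem_comp E comp_refl.
apply/setP => z; rewrite !mem_comp; apply/idP/idP => c; last exact: conn_trans c.
by apply: conn_trans c; rewrite connC.
Qed.

Lemma comp_eq_of_mem X x y : y \in component X x -> component X y = component X x.
Proof. by rewrite mem_comp connC -eq_comp => /eqP. Qed.

Lemma comp_in_comps X x : component X x \in comps ends X.
Proof. exact: imset_f. Qed.

Lemma compsP X C : reflect (exists x, C = component X x) (C \in comps ends X).
Proof. by apply: (iffP imsetP) => [[x _ ->]|[x ->]]; exists x. Qed.

Lemma comp_setU1 X f x :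
  let Ca := component X (ends f).1 in let Cb := component X (ends f).2 in
  component (f |: X) x = if x \in Ca :|: Cb then Ca :|: Cb else component X x.
Proof.
move=> Ca Cb; apply/setP => y; rewrite mem_comp conn_setU1.
case: ifP; rewrite !inE -/(conn X); last first.
  move/negbT; rewrite negb_or => /andP[/negbTE N1 /negbTE N2].
  by rewrite (connC X x (ends f).1) (connC X x (ends f).2) N1 N2 /= orbF.
have cC := connC X.
case/orP => cx; apply/idP/idP.
- case/or3P => [c|/andP[_ c]|/andP[_ c]]; by rewrite ?(conn_trans cx c) ?c ?orbT.
- by case/orP => c; [rewrite (conn_trans _ c) // cC | rewrite (cC x (ends f).1) cx c orbT].
- case/or3P => [c|/andP[_ c]|/andP[_ c]]; by rewrite ?(conn_trans cx c) ?c ?orbT.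
- by case/orP => c; [rewrite (cC x (ends f).2) cx c !orbT | rewrite (conn_trans _ c) // cC].
Qed.

Lemma comps_setU1 X f C :
  let Ca := component X (ends f).1 in let Cb := component X (ends f).2 in
  (C \in comps ends (f |: X)) =
    (C == Ca :|: Cb) || [&& C \in comps ends X, C != Ca & C != Cb].
Proof.
move=> Ca Cb; rewrite /Ca /Cb; apply/compsP/idP.
  case=> x ->; rewrite comp_setU1; case: ifP => [_|xC]; first by rewrite eqxx.
  rewrite comp_in_comps /=; apply/orP; right; apply/andP; split.
    by apply: contraFN xC => /eqP <-; rewrite inE comp_refl.
  by apply: contraFN xC => /eqP <-; rewrite inE comp_refl orbT.
case/orP => [/eqP ->|/and3P[/compsP[x ->] Na Nb]].
  by exists (ends f).1; rewrite comp_setU1 inE comp_refl.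
exists x; rewrite comp_setU1; case: ifP => [|//]; rewrite inE => /orP[] xC.
  by rewrite (comp_eq_of_mem xC) eqxx in Na.
by rewrite (comp_eq_of_mem xC) eqxx in Nb.
Qed.

Lemma comps_setU1_internal X f : internal X f -> comps ends (f |: X) = comps ends X.
Proof.
move=> fX; have E : component X (ends f).2 = component X (ends f).1.
  by apply: comp_eq_of_mem; rewrite mem_comp.
apply/setP => C; rewrite comps_setU1 E setUid.
by case: eqP => [->|_] /=; rewrite ?comp_in_comps ?andbT.
Qed.

Lemma card_comps_setU1 X f : ~~ internal X f ->
  #|comps ends (f |: X)|.+1 = #|comps ends X|.
Proof.
move=> Nf; set Ca := component X (ends f).1; set Cb := component X (ends f).2.
have NCab : Ca != Cb by rewrite eq_comp.
have E : comps ends (f |: X) = (Ca :|: Cb) |: ((comps ends X :\ Ca) :\ Cb).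
  apply/setP => C; rewrite comps_setU1 !inE -/Ca -/Cb.
  by case: (C \in comps ends X); case: (C != Ca); case: (C != Cb); rewrite ?orbF ?orbT.
have NU : Ca :|: Cb != Ca.
  apply: contra Nf => /eqP/setP /(_ (ends f).2).
  by rewrite in_setU /Cb comp_refl orbT /Ca mem_comp /internal => <-.
have Nin : (Ca :|: Cb) \notin (comps ends X :\ Ca) :\ Cb.
  rewrite !inE; apply/negP => /and3P[_ _ /compsP[x Ex]].
  have : (ends f).1 \in component X x by rewrite -Ex inE comp_refl.
  by move/comp_eq_of_mem; rewrite -/Ca => E'; rewrite Ex E' eqxx in NU.
rewrite E cardsU1 Nin (cardsD1 Ca (comps ends X)) (cardsD1 Cb (comps ends X :\ Ca)).
by rewrite comp_in_comps !inE eq_sym NCab comp_in_comps.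
Qed.

Lemma card_comps0 : #|comps ends set0| = n.
Proof.
have E x : component set0 x = [set x].
  apply/setP => y; rewrite mem_comp inE; apply/idP/eqP => [|->]; last exact: conn_refl.
  by case/connectP => -[|z p] /= => [_ ->//|/andP[/existsP[e]]]; rewrite inE.
by rewrite /comps (eq_imset _ E) card_imset ?card_ord //; apply: set1_inj.
Qed.

Definition step_edge e0 X x y := odflt e0 [pick g in X | joins ends g x y].

Lemma step_edgeP e0 X x y : adj ends X x y ->
  step_edge e0 X x y \in X /\ joins ends (step_edge e0 X x y) x y.
Proof.
case/existsP=> g gP; rewrite /step_edge; case: pickP => [h /andP[]//|/(_ g)].
by rewrite gP.
Qed.

Lemma cycle_of_path X e u p : e \notin X -> path (adj ends X) u p -> uniq (u :: p) ->
  joins ends e (last u p) u -> exists l, (l <= #|X|.+1)%N /\ has_cycle_of_length ends l.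
Proof.
move=> eNX pth up Je; pose l := (size p).+1; pose w j := nth u (u :: p) j.
pose st j := step_edge e X (w j) (w j.+1).
pose es (j : 'I_l) := if (j < size p)%N then st j else e.
have w_inj a b : (a < l)%N -> (b < l)%N -> (w a == w b) = (a == b).
  by move=> la lb; apply: nth_uniq.
have stP j : (j < size p)%N -> st j \in X /\ joins ends (st j) (w j) (w j.+1).
  by move=> lt; apply: step_edgeP; apply: (pathP u pth).
have es_inj : injective es.
  move=> j1 j2; have := ltn_ord j1; have := ltn_ord j2; rewrite /es /l ltnS => le2 le1.
  case: ifP => lt1; case: ifP => lt2.
  - move=> E; have [_ J1] := stP _ lt1; have [_ J2] := stP _ lt2; rewrite E in J1.
    apply: ord_inj; case: (joins_same J1 J2) => [[/eqP + _]|[/eqP + /eqP]].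
      by rewrite w_inj // => /eqP.
    by rewrite !w_inj // => /eqP E1 /eqP E2; move: E1 E2; lia.
  - by move=> E; have [] := stP _ lt1; rewrite E (negbTE eNX).
  - by move=> E; have [] := stP _ lt2; rewrite -E (negbTE eNX).
  - by move=> _; apply: ord_inj; move: le1 le2 (negbT lt1) (negbT lt2); lia.
exists l; split.
  have -> : #|X|.+1 = #|e |: X| by rewrite cardsU1 eNX.
  rewrite -[l in (l <= _)%N](card_ord l) -(card_imset _ es_inj).
  apply: subset_leq_card; apply/subsetP => _ /imsetP[j _ ->]; rewrite /es.
  by case: ifP => lt; [rewrite setU1r //; case: (stP _ lt) | rewrite setU11].
split=> //; exists (fun j : 'I_l => w j), es; split; [|split=> //].
  by move=> j1 j2 /eqP; rewrite w_inj // => /eqP /val_inj.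
move=> j; rewrite /es /=; case: ifP => lt.
  by rewrite modn_small /l ?ltnS //; case: (stP _ lt).
have -> : (j : nat) = size p by move: (ltn_ord j) (negbT lt); rewrite /l; lia.
by rewrite /l modnn /w /= -last_nth.
Qed.

Lemma cycle_of_internal X e : e \notin X -> internal X e ->
  exists l, (l <= #|X|.+1)%N /\ has_cycle_of_length ends l.
Proof.
move=> eNX; rewrite /internal /conn => /connectP[p0 pth0].
case: (shortenP pth0) => p pth up _ lastp.
by apply: (cycle_of_path eNX pth up); rewrite -lastp joinsC joins_ends.
Qed.

End Connectivity.

Section Circuits.
Variables (n k : nat) (ends : 'I_k -> 'I_n * 'I_n).
Implicit Types (X : {set 'I_k}) (e f : 'I_k).

Lemma circuit_internal X e : circuit ends X -> e \in X -> internal ends (X :\ e) e.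
Proof. by move/forall_inP; apply. Qed.

Lemma circuit_setU1_internal X e : circuit ends (e |: X) -> e \notin X -> internal ends X e.
Proof. by move=> cX eNX; have := circuit_internal cX (setU11 e X); rewrite setU1K. Qed.

Variable i : nat.
Hypothesis girth_gt : forall l, has_cycle_of_length ends l -> (i < l)%N.

Lemma leq_card_internal X e : e \notin X -> internal ends X e -> (i <= #|X|)%N.
Proof.
by move=> eNX /(cycle_of_internal eNX)[l [le_l /girth_gt]] /leq_trans /(_ le_l).
Qed.

Lemma card_comps_forest X : (#|X| <= i)%N -> #|comps ends X| + #|X| = n.
Proof.
move cX : #|X| => c; elim: c X cX => [|c IH] X cX le_ci.
  by move/eqP: cX; rewrite cards_eq0 => /eqP ->; rewrite card_comps0 addn0.
have [e eX] : exists e, e \in X by apply/set0Pn; rewrite -card_gt0 cX.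
have cXe : #|X :\ e| = c by move: cX; rewrite (cardsD1 e) eX add1n => -[].
have Ne : ~~ internal ends (X :\ e) e.
  by apply/negP => /leq_card_internal; rewrite setD11 cXe => /(_ isT); lia.
by have := IH _ cXe (ltnW le_ci); rewrite -(card_comps_setU1 Ne) setD1K //; lia.
Qed.

Lemma circuit_setU1 X e : (#|X| <= i)%N -> e \notin X -> internal ends X e ->
  #|X| = i /\ circuit ends (e |: X).
Proof.
move=> le_Xi eNX eX.
split; first by apply/eqP; rewrite eqn_leq le_Xi (leq_card_internal eNX eX).
apply/forall_inP => f; case/setU1P => [->|fX]; first by rewrite setU1K.
have Nfe : f != e by apply: contraNneq eNX => <-.
have NeXf : ~~ internal ends (X :\ f) e.
  apply/negP => /leq_card_internal; rewrite !inE negb_and eNX orbT => /(_ isT).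
  by move: le_Xi; rewrite (cardsD1 f X) fX; lia.
rewrite setD1U1 // /internal conn_setU1.
move: eX; rewrite -{1}(setD1K fX) /internal conn_setU1.
move: NeXf; rewrite /internal => /negbTE ->.
case/or3P => [//|/andP[c1 c2]|/andP[c1 c2]].
  by rewrite (connC _ _ (ends f).1 (ends e).1) c1 (connC _ _ (ends e).2 (ends f).2) c2 orbT.
by rewrite c1 c2 !orbT.
Qed.
End Circuits.

Section TopAndSplitStates.
Variables (n k : nat) (ends : 'I_k -> 'I_n * 'I_n) (m' : nat).
Implicit Types (X s : {set 'I_k}) (e g : 'I_k).
Local Notation m := m'.+3.
Local Notation component := (Defs.comp ends).

Definition top_weights X : {ffun {set 'I_n} -> 'I_m} :=
  [ffun C => if C \in comps ends X then ord_max else ord0].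
Definition top_state X : State n k m := (X, top_weights X).

Lemma top_state_eq X Y : (top_state X == top_state Y) = (X == Y).
Proof. by apply/eqP/eqP => [[]|->]. Qed.

Lemma d_e_top_state X e : d_e ends e (top_state X) =
  if internal ends X e then Some (top_state (e |: X)) else None.
Proof.
rewrite /d_e /= eq_comp -/(internal ends X e); case: ifP => eX.
  by rewrite /top_state /top_weights comps_setU1_internal.
by rewrite /top_weights !ffunE !comp_in_comps /= ifT //; lia.
Qed.

(* The exponents 1 and m - 2 on the two components joined by e, and m - 1 elsewhere: since
   m >= 3, merging the first two is the only merge that does not overflow x^m. *)
Definition split_weight (T : eqType) (C1 C2 C : T) : nat :=
  if C == C1 then 1 else if C == C2 then m'.+1 else m'.+2.

Definition split_state s e : State n k m :=
  (s :\ e, [ffun C => if C \in comps ends (s :\ e) then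
     inord (split_weight (component (s :\ e) (ends e).1) (component (s :\ e) (ends e).2) C)
     else ord0]).

Lemma split_state_weight s e C : C \in comps ends (s :\ e) ->
  nat_of_ord ((split_state s e).2 C) =
  split_weight (component (s :\ e) (ends e).1) (component (s :\ e) (ends e).2) C.
Proof.
by move=> CX; rewrite ffunE CX inordK // /split_weight; case: ifP => //; case: ifP.
Qed.

Lemma split_weight_overflow (T : eqType) (C1 C2 Ca Cb : T) : Ca != Cb -> C1 != C2 ->
  (m <= split_weight C1 C2 Ca + split_weight C1 C2 Cb)%N =
  ~~ ((Ca == C1) && (Cb == C2) || (Ca == C2) && (Cb == C1)).
Proof.
move=> Nab N12; rewrite /split_weight.
by case: (Ca =P C1); case: (Ca =P C2); case: (Cb =P C1); case: (Cb =P C2) => //=;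
  do ?[move=> ?]; subst; rewrite ?eqxx // in Nab N12 *; lia.
Qed.

Variable i : nat.
Hypothesis girth_gt : forall l, has_cycle_of_length ends l -> (i < l)%N.

Lemma d_e_split_state s e g : e \in s -> (#|s :\ e| < i)%N -> g \notin s :\ e ->
  d_e ends g (split_state s e) =
  if internal ends s g then Some (top_state (g |: (s :\ e))) else None.
Proof.
move=> es lt_i gNX; set X := s :\ e in lt_i gNX *.
have forest f : f \notin X -> ~~ internal ends X f.
  by move=> fNX; apply/negP => /(leq_card_internal girth_gt fNX); lia.
set C1 := component X (ends e).1; set C2 := component X (ends e).2.
set Ca := component X (ends g).1; set Cb := component X (ends g).2.
have N12 : C1 != C2 by rewrite eq_comp forest // setD11.
have Nab : Ca != Cb by rewrite eq_comp forest.
have int_g : internal ends s g = (Ca == C1) && (Cb == C2) || (Ca == C2) && (Cb == C1).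
  rewrite /internal -(setD1K es) conn_setU1 -/X -/(internal ends X g) (negbTE (forest g gNX)).
  by rewrite -!eq_comp -/C1 -/C2 -/Ca -/Cb (eq_sym C2) (eq_sym C1).
rewrite /d_e /= eq_comp -/X -/(internal ends X g) (negbTE (forest g gNX)).
rewrite !split_state_weight ?comp_in_comps // -/C1 -/C2 -/Ca -/Cb.
rewrite (split_weight_overflow Nab N12) -int_g.
case: (boolP (internal ends s g)) => //= gs; congr (Some (_, _)); apply/ffunP => C.
have merge : (split_weight C1 C2 Ca + split_weight C1 C2 Cb)%N = m'.+2.
  move: gs; rewrite int_g /split_weight.
  by case/orP => /andP[/eqP -> /eqP ->]; rewrite eqxx eq_sym (negbTE N12) eqxx ?addn1.
rewrite /top_weights !ffunE comps_setU1 -/X -/Ca -/Cb.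
case: eqP => [_|_]; first by apply: val_inj; rewrite merge /= insubdK //; apply: ltnSn.
case: ifP => [CaCb|/negbT].
  case/orP: CaCb => /eqP ->; rewrite eqxx /= ?andbF;
  by apply: val_inj; rewrite /= insubdK.
rewrite negb_or => /andP[Na Nb]; rewrite Na Nb !andbT /=.
case: ifP => // CX; apply: val_inj; rewrite /= inordK /split_weight.
  move: gs; rewrite int_g.
  by case/orP => /andP[/eqP <- /eqP <-]; rewrite (negbTE Na) (negbTE Nb).
by case: ifP => //; case: ifP.
Qed.

Lemma valid_top_state st : valid ends st -> #|st.1| = i ->
  (m'.+2 * (n - i) <= deg_j ends st)%N ->
  st = top_state st.1 /\ deg_j ends st = (m'.+2 * (n - i))%N.
Proof.
case: st => s w /= /forall_inP w0 cs; rewrite /deg_j /=.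
have comps_s : #|comps ends s| = (n - i)%N.
  by have := card_comps_forest girth_gt (eq_leq cs); rewrite cs; lia.
have := @leqif_sum _ (fun C => C \in comps ends s) (fun C => nat_of_ord (w C) == m'.+2)
  _ (fun _ => m'.+2) (fun C _ => leqif_eq (ltnSE (ltn_ord (w C)))).
rewrite sum_nat_const comps_s mulnC => -[le_top eq_top] ge_top.
have deg_top : (\sum_(C in comps ends s) w C)%N = (m'.+2 * (n - i))%N.
  by apply/eqP; rewrite eqn_leq le_top ge_top.
split=> //; congr pair; apply/ffunP => C; rewrite /top_weights ffunE.
case: ifP => CX; apply: val_inj => /=; apply/eqP; last by apply: w0; rewrite CX.
by move: deg_top => /eqP; rewrite eq_top => /forall_inP; apply.
Qed.

Lemma split_state_bidegree s e : e \in s -> #|s| = i ->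
  [&& valid ends (split_state s e), deg_i (split_state s e) == i.-1
    & deg_j ends (split_state s e) == (m'.+2 * (n - i))%N].
Proof.
move=> es cs; set X := s :\ e.
have i_gt0 : (0 < i)%N by rewrite -cs card_gt0; apply/set0Pn; exists e.
have cX : #|X| = i.-1 by rewrite -cs (cardsD1 e s) es.
have eNX : e \notin X by rewrite setD11.
have NeX : ~~ internal ends X e.
  by apply/negP => /(leq_card_internal girth_gt eNX); rewrite cX; lia.
set C1 := component X (ends e).1; set C2 := component X (ends e).2.
have N12 : C1 != C2 by rewrite eq_comp.
have C1X : C1 \in comps ends X by apply: comp_in_comps.
have C2X : C2 \in comps ends X by apply: comp_in_comps.
apply/and3P; split.
- by apply/forall_inP => C CX; rewrite ffunE (negbTE CX).
- by rewrite /deg_i /= cX.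
rewrite /deg_j /= -/X (eq_bigr (split_weight C1 C2)); last first.
  by move=> C; apply: split_state_weight.
rewrite (big_setD1 C1) //= (big_setD1 C2) /=; last by rewrite !inE eq_sym N12.
rewrite (eq_bigr (fun _ => m'.+2)); last first.
  by move=> C; rewrite !inE /split_weight => /and3P[/negbTE -> /negbTE -> _].
rewrite sum_nat_const /split_weight eqxx (eq_sym C2 C1) (negbTE N12) eqxx.
have := card_comps_forest girth_gt (X := X) (leq_trans (eq_leq cX) (leq_pred i)).
rewrite (cardsD1 C1 (comps ends X)) C1X (cardsD1 C2 (comps ends X :\ C1)).
rewrite !inE eq_sym N12 C2X.
set c := #|_ :\ C2|; rewrite cX => comps_X; have -> : (n - i = c.+1)%N by lia.
by rewrite mulnS mulnC; apply/eqP; lia.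
Qed.

End TopAndSplitStates.

Section SplitCoefficients.
Local Open Scope ring_scope.
Variables (n k : nat) (ends : 'I_k -> 'I_n * 'I_n) (i : nat).
Hypothesis girth_gt : forall l, has_cycle_of_length ends l -> (i < l)%N.
Hypothesis i_gt0 : (0 < i)%N.
Variable a : {set 'I_k} -> int.
Implicit Types (X s r t : {set 'I_k}) (e f g h : 'I_k).

Definition edge_sign X g : int := (-1) ^+ #|[set f in X | (f < g)%N]|.
Definition max_edge s e := (e \in s) && [forall f in s, (f <= e)%N].
Definition unextendable s e := ~~ [exists h : 'I_k, (e < h)%N && circuit ends (h |: s)].
Definition split_pair s e := [&& #|s| == i, max_edge s e & unextendable s e].

(* The contribution of the edge g to the coefficient of the top state on r in
   a(s) * edge_sign (s :\ e) e * d(split_state s e). *)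
Definition split_coef r s e g : int :=
  if [&& split_pair s e, g \notin s :\ e, internal ends s g & g |: (s :\ e) == r]
  then a s * edge_sign (s :\ e) e * edge_sign (s :\ e) g else 0.

Lemma edge_sign_sqr X g : edge_sign X g * edge_sign X g = 1.
Proof. by rewrite -exprMn mulrNN mulr1 expr1n. Qed.

Lemma edge_sign_max X h : (forall f, f \in X -> (f < h)%N) -> edge_sign X h = (-1) ^+ #|X|.
Proof.
move=> ltXh; rewrite /edge_sign; congr (_ ^+ _); apply: eq_card => z.
by rewrite inE; case: (boolP (z \in X)) => // /ltXh ->.
Qed.

Lemma edge_sign_setU1 X g h : (g < h)%N -> edge_sign (h |: X) g = edge_sign X g.
Proof.
move=> lt_gh; rewrite /edge_sign; congr (_ ^+ _); apply: eq_card => z.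
rewrite !inE; case: (z =P h) => [->|] //=.
by rewrite ltnNge ltnW // andbF.
Qed.

Lemma max_edge_exists r : r != set0 -> exists e, max_edge r e.
Proof.
move=> /set0Pn r0; have [e [er e_max]] := exists_max_ord r0.
by exists e; rewrite /max_edge er; apply/forall_inP.
Qed.

Lemma max_edge_uniq r e f : max_edge r e -> max_edge r f -> e = f.
Proof.
case/andP => er /forall_inP e_max; case/andP => fr /forall_inP f_max.
by apply: ord_inj; apply/eqP; rewrite eqn_leq e_max // f_max.
Qed.

Lemma split_pair_card s e :
  split_pair s e -> [/\ #|s| = i, e \in s & #|s :\ e| = i.-1].
Proof.
by case/and3P => /eqP cs /andP[es _] _; split=> //; rewrite -cs (cardsD1 e s) es.
Qed.

Lemma split_coef_diag r s e : split_coef r s e e != 0 ->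
  [/\ s = r, max_edge r e & unextendable r e].
Proof.
rewrite /split_coef; case: ifP => [|_]; last by rewrite eqxx.
case/and4P=> /and3P[_ es ue] _ _ /eqP <- _; rewrite setD1K //; by case/andP: es.
Qed.

Lemma split_coef_split_pair r s e g : split_coef r s e g != 0 -> split_pair s e.
Proof. by rewrite /split_coef; case: ifP => [/andP[]|] //; rewrite eqxx. Qed.

Lemma split_coef_offdiag r s e g : split_coef r s e g != 0 -> g != e ->
  [/\ e \notin r, forall f, f \in r -> (f < e)%N, circuit ends (e |: r),
      internal ends s g & [/\ s = e |: (r :\ g), g \in r & #|s| = i]].
Proof.
rewrite /split_coef; case: ifP => [|_]; last by rewrite eqxx.
case/and4P=> /and3P[/eqP cs /andP[es /forall_inP e_max] ue] gNX gs /eqP Er _ Nge.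
have gNs : g \notin s by move: gNX; rewrite !inE negb_and negbK (negbTE Nge).
have [_ circ_g] := circuit_setU1 girth_gt (eq_leq cs) gNs gs.
have lt_ge : (g < e)%N.
  rewrite ltn_neqAle leqNgt Nge /=; apply: contra ue => lt_eg.
  by apply/existsP; exists g; rewrite lt_eg circ_g.
have Er' : r :\ g = s :\ e by rewrite -Er setU1K.
split.
- by rewrite -Er !inE negb_or negb_and negbK eqxx /= andbT eq_sym.
- move=> f; rewrite -Er => /setU1P [->//|]; rewrite !inE => /andP[Nfe fs].
  by rewrite ltn_neqAle e_max // andbT.
- by rewrite -Er setUCA setD1K.
- exact: gs.
- by split; rewrite ?Er' ?setD1K // -Er setU11.
Qed.

Hypothesis cocycle : forall t, #|t| = i.+1 -> circuit ends t ->
  \sum_(e in t) edge_sign (t :\ e) e * a (t :\ e) = 0.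

Lemma sum_split_coef_unextendable r mr : #|r| = i -> max_edge r mr -> unextendable r mr ->
  \sum_g \sum_s \sum_e split_coef r s e g = a r.
Proof.
move=> r_card mr_max mr_ue; have mr_r : mr \in r by case/andP: mr_max.
transitivity (\sum_g (if g == mr then a r else 0)); last first.
  by rewrite (sum_only1 (i0 := mr)) ?eqxx // => g; case: ifP => // _; rewrite eqxx.
apply: eq_bigr => g _; rewrite (sum_only2 (i0 := r) (j0 := g)).
  rewrite /split_coef; case: (g =P mr) => [->|Ngm].
    rewrite /split_pair r_card eqxx mr_max mr_ue setD11 (conn_edge _ mr_r) setD1K //= eqxx.
    by rewrite -mulrA edge_sign_sqr mulr1.
  case: ifP => // /andP[/and3P[_ g_max _] _].
  by case: Ngm; apply: max_edge_uniq g_max mr_max.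
move=> s e nz; case: (e =P g) => [Eeg|/nesym/eqP Nge].
  by subst e; have [-> _ _] := split_coef_diag nz; rewrite eqxx.
have [_ lt_re circ_e _ _] := split_coef_offdiag nz Nge.
by case/negP: mr_ue; apply/existsP; exists e; rewrite circ_e lt_re.
Qed.

Section Extendable.
Variables (r : {set 'I_k}) (mr hs : 'I_k).
Hypothesis r_card : #|r| = i.
Hypothesis mr_max : max_edge r mr.
Hypothesis hs_ext : (mr < hs)%N && circuit ends (hs |: r).
Hypothesis hs_max : forall h, (mr < h)%N && circuit ends (h |: r) -> (h <= hs)%N.

Lemma lt_extender f : f \in r -> (f < hs)%N.
Proof.
case/andP: mr_max hs_ext => _ /forall_inP le_mr /andP[lt_mr _] fr.
exact: leq_ltn_trans (le_mr f fr) lt_mr.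
Qed.

Lemma extender_notin : hs \notin r.
Proof. by apply/negP => /lt_extender; rewrite ltnn. Qed.

Lemma internal_extender : internal ends r hs.
Proof. by case/andP: hs_ext => _ /circuit_setU1_internal; apply; apply: extender_notin. Qed.

Lemma split_pair_extender g : g \in r -> split_pair (hs |: r :\ g) hs.
Proof.
move=> gr; rewrite /split_pair.
have hsN : hs \notin r :\ g by rewrite !inE negb_and extender_notin orbT.
have -> /= : #|hs |: r :\ g| == i by rewrite cardsU1 hsN -r_card (cardsD1 g r) gr.
apply/andP; split.
  rewrite /max_edge setU11 /=; apply/forall_inP => f /setU1P [->//|].
  by rewrite !inE => /andP[_ /lt_extender /ltnW].
apply/negP => /existsP [h /andP[lt_hs_h circ_h]].
have hN : h \notin hs |: r :\ g.
  rewrite !inE negb_or negb_and; apply/andP; split.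
    by apply: contraTneq lt_hs_h => ->; rewrite ltnn.
  by apply/orP; right; apply/negP => /lt_extender /(ltn_trans lt_hs_h); rewrite ltnn.
have h_r : internal ends r h.
  apply: conn_subset_internal internal_extender _ (circuit_setU1_internal circ_h hN).
  by rewrite setU1K ?subsetDl // !inE negb_and extender_notin orbT.
have hNr : h \notin r by apply/negP => /lt_extender /(ltn_trans lt_hs_h); rewrite ltnn.
have [_ circ_hr] := circuit_setU1 girth_gt (eq_leq r_card) hNr h_r.
have := hs_max (h := h); case/andP: hs_ext => lt_mr _.
by rewrite circ_hr andbT (ltn_trans lt_mr lt_hs_h) leqNgt lt_hs_h => /(_ isT).
Qed.

Lemma split_coef_extender_support s e g : split_coef r s e g != 0 ->
  (s == hs |: r :\ g) && (e == hs).
Proof.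
move=> nz; case: (e =P g) => [Eeg|/nesym/eqP Nge].
  subst e; have [_ g_max g_ue] := split_coef_diag nz.
  move: g_ue; rewrite (max_edge_uniq g_max mr_max) => /negP[].
  by apply/existsP; exists hs.
have [_ lt_re circ_e s_g [Es gr cs]] := split_coef_offdiag nz Nge.
have mr_r : mr \in r by case/andP: mr_max.
have le_e_hs : (e <= hs)%N by apply: hs_max; rewrite circ_e lt_re.
suff Ee : e = hs by rewrite Es Ee !eqxx.
apply: ord_inj; apply/eqP; rewrite eqn_leq le_e_hs /= leqNgt; apply/negP => lt_e_hs.
case/and3P: (split_coef_split_pair nz) => _ _ /negP; apply; apply/existsP; exists hs.
have hsN : hs \notin s.
  rewrite Es !inE negb_or negb_and extender_notin orbT andbT.
  by apply: contraTneq lt_e_hs => ->; rewrite ltnn.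
have hs_s : internal ends s hs.
  apply: conn_subset_internal s_g _ internal_extender.
  by rewrite Es; apply/subsetP => z z_r; rewrite setU1r.
by have [_ ->] := circuit_setU1 girth_gt (eq_leq cs) hsN hs_s; rewrite lt_e_hs.
Qed.

Lemma sum_split_coef_extendable : \sum_g \sum_s \sum_e split_coef r s e g = a r.
Proof.
have hsN := extender_notin; have lt_r := lt_extender.
rewrite (eq_bigr (fun g => split_coef r (hs |: r :\ g) hs g)); last first.
  by move=> g _; apply: sum_only2 => s e; apply: split_coef_extender_support.
transitivity (\sum_(g in r) (-1) ^+ i.-1 * (edge_sign (r :\ g) g * a (hs |: r :\ g))).
  rewrite [RHS]big_mkcond /=; apply: eq_bigr => g _.
  have hsNg : hs \notin r :\ g by rewrite !inE negb_and hsN orbT.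
  rewrite /split_coef setU1K //; case: (boolP (g \in r)) => gr; last first.
    by case: ifP => // /and4P[_ _ _ /eqP E]; case/negP: gr; rewrite -E setU11.
  have Ngh : g != hs by apply: contraNneq hsN => <-.
  rewrite setD11 setD1K // eqxx split_pair_extender // -setD1U1 //.
  have /andP[_ circ_hs] := hs_ext.
  rewrite (circuit_internal circ_hs) ?setU1r //= (edge_sign_max (X := r :\ g) (h := hs)).
    have -> : #|r :\ g| = i.-1 by rewrite -r_card (cardsD1 g r) gr.
    by rewrite -mulrA mulrCA [a _ * _]mulrC.
  by move=> f; rewrite inE => /andP[_ /lt_r].
have /andP[_ circ_hs] := hs_ext.
have := cocycle (t := hs |: r); rewrite cardsU1 hsN r_card => /(_ erefl circ_hs).
rewrite big_setU1 //= setU1K // (edge_sign_max lt_r) r_card => sum0.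
rewrite -big_distrr /=.
have -> : \sum_(g in r) edge_sign (r :\ g) g * a (hs |: r :\ g) = - ((-1) ^+ i * a r).
  apply/eqP; rewrite -addr_eq0 [X in X == 0]addrC -[X in _ == X]sum0; apply/eqP.
  congr (_ + _); apply: eq_bigr => g gr.
  have Ngh : g != hs by apply: contraNneq hsN => <-.
  by rewrite setD1U1 // edge_sign_setU1 // lt_r.
rewrite -{2}(prednK i_gt0) exprS mulN1r mulNr opprK mulrA.
by rewrite -exprMn mulrNN mulr1 expr1n mul1r.
Qed.

End Extendable.

Lemma sum_split_coef r : #|r| = i ->
  \sum_s \sum_e \sum_g split_coef r s e g = a r.
Proof.
move=> r_card; have [mr mr_max] : exists mr, max_edge r mr.
  by apply: max_edge_exists; rewrite -card_gt0 r_card.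
under eq_bigr => s _ do rewrite exchange_big.
rewrite exchange_big /=; case: (boolP (unextendable r mr)) => [|/negPn/existsP ext].
  exact: sum_split_coef_unextendable.
have [hs [hs_ext hs_max]] := exists_max_ord ext.
exact: sum_split_coef_extendable hs_ext hs_max.
Qed.

End SplitCoefficients.

Section Primitive.
Local Open Scope ring_scope.
Variables (n k : nat) (ends : 'I_k -> 'I_n * 'I_n) (m' i j : nat).
Hypothesis girth_gt : forall l, has_cycle_of_length ends l -> (i < l)%N.
Hypothesis i_gt0 : (0 < i)%N.
Local Notation m := m'.+3.
Local Notation St := (State n k m).
Variable x : {ffun St -> int}.
Hypothesis x_cochain : in_cochain ends i j x.
Hypothesis j_ge : (m'.+2 * (n - i) <= j)%N.
Implicit Types (s r t : {set 'I_k}) (e g : 'I_k).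
Local Notation top_state := (top_state ends m').
Local Notation split_state := (split_state ends m').

Lemma cochain_support st : x st != 0 ->
  [/\ st = top_state st.1, #|st.1| = i & j = (m'.+2 * (n - i))%N].
Proof.
move=> /x_cochain /and3P[st_valid /eqP cs /eqP dj]; rewrite /deg_i in cs.
have ge_top : (m'.+2 * (n - i) <= deg_j ends st)%N by rewrite dj.
by have [st_top deg_top] := valid_top_state girth_gt st_valid cs ge_top; rewrite -dj.
Qed.

Lemma sum_cochain_top (F : St -> int) : \sum_(st : St) x st * F st =
  \sum_(s : {set 'I_k}) (if #|s| == i then x (top_state s) * F (top_state s) else 0).
Proof.
transitivity (\sum_(s : {set 'I_k}) \sum_(w : {ffun {set 'I_n} -> 'I_m}) x (s, w) * F (s, w)).
  by rewrite pair_big /=; apply: eq_bigr => -[s w].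
apply: eq_bigr => s _; rewrite (sum_only1 (i0 := top_weights ends m' s)); last first.
  move=> w; rewrite mulf_eq0 negb_or => /andP[/cochain_support[E _ _] _].
  by case: E => /= ->.
case: ifP => // cs; case: (x (top_state s) =P 0) => [->|/eqP/cochain_support[_ /= cs' _]].
  by rewrite mul0r.
by rewrite cs' eqxx in cs.
Qed.

Definition top_coef s := x (top_state s).

Lemma dcoef_top_state s t : dcoef ends (top_state s) (top_state t) =
  \sum_e (if [&& e \notin s, internal ends s e & e |: s == t] then edge_sign s e else 0).
Proof.
rewrite /dcoef big_mkcond; apply: eq_bigr => e _; rewrite d_e_top_state.
case: (e \in s) => //=; case: (internal ends s e) => /=; last by rewrite mulr0.
by rewrite [_ == _]top_state_eq; case: (e |: s == t); rewrite ?mulr1 ?mulr0.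
Qed.

Lemma top_coef_cocycle : (forall u, dmap ends x u = 0) ->
  forall t, #|t| = i.+1 -> circuit ends t ->
  \sum_(e in t) edge_sign (t :\ e) e * top_coef (t :\ e) = 0.
Proof.
move=> x_cocycle t ct circ_t.
rewrite -[RHS](x_cocycle (top_state t)) /dmap ffunE sum_cochain_top.
rewrite (eq_bigr (fun s => \sum_e
  (if [&& #|s| == i, e \notin s, internal ends s e & e |: s == t]
   then top_coef s * edge_sign s e else 0))); last first.
  move=> s _; case: ifP => _ /=; last by rewrite big1.
  rewrite dcoef_top_state big_distrr /=; apply: eq_bigr => e _.
  by case: ifP => _; rewrite ?mulr0.
rewrite exchange_big /= [LHS]big_mkcond /=; apply: eq_bigr => e _.
rewrite (sum_only1 (i0 := t :\ e)); last first.
  by move=> s; case: ifP => [/and4P[_ eNs _ /eqP <-] _|]; rewrite ?eqxx ?setU1K.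
case: (boolP (e \in t)) => et.
  have ct' : #|t :\ e| == i by move: ct; rewrite (cardsD1 e t) et add1n => -[->].
  by rewrite ct' setD11 (circuit_internal circ_t et) setD1K // eqxx /= mulrC.
by case: ifP => // /and4P[_ _ _ /eqP Et]; case/negP: et; rewrite -Et setU11.
Qed.

Lemma dcoef_split_state s e (u : St) : split_pair ends i s e ->
  dcoef ends (split_state s e) u =
  \sum_(g | [&& g \notin s :\ e, internal ends s g & top_state (g |: (s :\ e)) == u])
     edge_sign (s :\ e) g.
Proof.
case/split_pair_card => _ es cXe; rewrite /dcoef -[(split_state s e).1]/(s :\ e).
rewrite big_mkcondr; apply: eq_bigr => g gN.
rewrite (d_e_split_state m' girth_gt) //; last by rewrite cXe prednK.
case: (internal ends s g); last by rewrite mulr0.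
by rewrite (inj_eq (@Some_inj _)) andTb; case: (_ == u); rewrite ?mulr1 ?mulr0.
Qed.

Definition primitive : {ffun St -> int} := [ffun st => \sum_s \sum_e
  (if split_pair ends i s e && (st == split_state s e)
   then top_coef s * edge_sign (s :\ e) e else 0)].

Lemma primitive_in_cochain : in_cochain ends i.-1 j primitive.
Proof.
move=> st; rewrite ffunE; apply: contraR => st_out; apply/eqP.
apply: big1 => s _; apply: big1 => e _; case: ifP => // /andP[se /eqP st_se].
case: (top_coef s =P 0) => [->|/eqP nz]; first by rewrite mul0r.
have [_ _ dj] := cochain_support nz; have [cs es _] := split_pair_card se.
by case/negP: st_out; rewrite st_se dj; apply: split_state_bidegree.
Qed.

Lemma dmap_primitive_expand (u : St) : dmap ends primitive u =
  \sum_s \sum_e (if split_pair ends i s e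
                 then top_coef s * edge_sign (s :\ e) e * dcoef ends (split_state s e) u
                 else 0).
Proof.
rewrite /dmap ffunE (eq_bigr (fun st => \sum_s \sum_e
   (if split_pair ends i s e && (st == split_state s e)
    then top_coef s * edge_sign (s :\ e) e * dcoef ends st u else 0))); last first.
  move=> st _; rewrite ffunE big_distrl; apply: eq_bigr => s _.
  by rewrite big_distrl; apply: eq_bigr => e _; case: ifP => _ /=; rewrite ?mul0r.
rewrite exchange_big; apply: eq_bigr => s _; rewrite exchange_big; apply: eq_bigr => e _.
rewrite (sum_only1 (i0 := split_state s e)) ?eqxx ?andbT //.
by move=> st; case: ifP => [/andP[_ /eqP ->]|]; rewrite ?eqxx.
Qed.

Lemma dmap_primitive :
  (forall u, dmap ends x u = 0) -> forall u, dmap ends primitive u = x u.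
Proof.
move=> x_cocycle u; rewrite dmap_primitive_expand.
case: (boolP (u == top_state u.1)) => [/eqP ->|not_top]; last first.
  case: (x u =P 0) => [->|/eqP/cochain_support[E _ _]]; last by rewrite -E eqxx in not_top.
  apply: big1 => s _; apply: big1 => e _; case: ifP => // se.
  rewrite dcoef_split_state // big_pred0 ?mulr0 // => g.
  by case: eqP => [E|]; [rewrite -E eqxx in not_top | rewrite !andbF].
set r := u.1; transitivity (\sum_s \sum_e \sum_g split_coef ends i top_coef r s e g).
  apply: eq_bigr => s _; apply: eq_bigr => e _; rewrite /split_coef.
  case: (boolP (split_pair ends i s e)) => se; last first.
    by rewrite big1 // => g _; rewrite (negbTE se).
  rewrite dcoef_split_state // big_distrr big_mkcond; apply: eq_bigr => g _.
  by rewrite andTb [_ == top_state r]top_state_eq.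
case: (boolP (#|r| == i)) => cr.
  exact: (sum_split_coef girth_gt i_gt0 (top_coef_cocycle x_cocycle) (eqP cr)).
case: (x (top_state r) =P 0) => [->|/eqP/cochain_support[_ /= cr' _]]; last first.
  by rewrite cr' eqxx in cr.
apply: big1 => s _; apply: big1 => e _; apply: big1 => g _.
rewrite /split_coef; case: ifP => // /and4P[se gN _ /eqP Er].
have [_ _ cXe] := split_pair_card se.
by case/negP: cr; rewrite -Er cardsU1 gN cXe add1n prednK.
Qed.

End Primitive.

Theorem proposition2p8 (n k : nat) (ends : 'I_k -> 'I_n * 'I_n) (m i j : nat) :
  (3 <= m)%N -> (0 < i)%N ->
  (forall l, has_cycle_of_length ends l -> (i < l)%N) ->
  ((m - 1) * (n - i) <= j)%N ->
  @H_vanishes n k m ends i j.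
Proof.
case: m => [|[|[|m']]] // _ i_gt0 girth_gt; rewrite subn1 /= => j_ge x x_cochain x_cocycle.
exists (primitive ends i x); split.
  exact: (primitive_in_cochain girth_gt x_cochain j_ge).
exact: (dmap_primitive girth_gt i_gt0 x_cochain j_ge x_cocycle).
Qed.
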